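(* Let $d\ge4$, let $F$ be a field with $\operatorname{char}F=0$ or $\operatorname{char}F>d$, and let $K/F$ be a degree $d$ extension whose Galois closure $L$ has $\mathrm{Gal}(L/F)\cong S_d$. Let $1,\alpha_1,\dots,\alpha_{d-1}$ be an $F$-basis of $K$ with $\mathrm{Tr}_{K/F}(\alpha_i)=0$ for $i\ge1$, and let $1,\alpha_1^*,\dots,\alpha_{d-1}^*$ be the dual basis with respect to the trace form $(x,y)\mapsto\mathrm{Tr}_{K/F}(xy)$. Let $Q^1,\dots,Q^{\beta}\in F[x_1,\dots,x_{d-1}]$ be the quadratic forms defined below. Then for every $\ell$, \[Q^\ell(\alpha_1^*,\dots,\alpha_{d-1}^* )=0\quad\text{in }K,\] and consequently $Q^\ell$ vanishes at each of the $d$ points $[\sigma_m(\alpha_1^* ):\dots:\sigma_m(\alpha_{d-1}^* )]\in\mathbf{P}^{d-2}(L)$, $m=1,\dots,d$.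
   Context: Let $\sigma_1=\mathrm{id},\sigma_2,\dots,\sigma_d$ be the $F$-embeddings $K\hookrightarrow L$, write $\alpha^{(m)}=\sigma_m(\alpha)$ for $\alpha\in K$, and identify $\mathrm{Gal}(L/F)$ with $S_d=\mathrm{Sym}\{1,\dots,d\}$ via its action on the indices of the $\alpha^{(m)}$ for a primitive element $\alpha$ of $K$. Let $V_1=\mathrm{Span}_F\{\alpha_1,\dots,\alpha_{d-1}\}$ (the trace-zero elements of $K$). View $L$ as a representation of $S_d$ over $F$; let $W_{(d-2,2)}\subseteq L$ be its isotypic component of the Specht module $V_{(d-2,2)}$, and $V_2=W_{(d-2,2)}\cap L^{S_2\times S_{d-2}}$, where $S_2\times S_{d-2}$ is the stabilizer of $\{1,2\}$; $V_2$ has $F$-dimension $\beta=d(d-3)/2$. Define the quadratic map $q\colon V_1\to L$ by \[q(\alpha)=\sum_{\tau\in S_{d-2}}\big(\alpha^{(1)}-\alpha^{(\tau(3))}\big)\big(\alpha^{(2)}-\alpha^{(\tau(4))}\big),\] with $S_{d-2}$ the permutations of $\{3,\dots,d\}$; its image lies in $V_2$. Fix an $F$-basis $\omega_1,\dots,\omega_\beta$ of $V_2$ and define the quadratic forms $Q^\ell$ by $q\big(\sum_j a_j\alpha_j\big)=\sum_{\ell=1}^{\beta}Q^\ell(a_1,\dots,a_{d-1})\,\omega_\ell$ for all $a_j\in F$. *)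

From HB Require Import structures.
From mathcomp Require Import all_boot all_order all_algebra all_fingroup all_field.
From mathcomp Require Import mpoly.
Set Implicit Arguments. Unset Strict Implicit. Unset Printing Implicit Defensive.
Import GRing.Theory.
Local Open Scope ring_scope.

Section Defs.
Variables (F : fieldType) (L : splittingFieldType F) (d : nat).
Variable (K : {subfield L}).
Variable (s : 'I_d -> gal_of (fullv : {vspace L})).

Definition idx_perm (g : gal_of (fullv : {vspace L})) (m : 'I_d) : 'I_d :=
  odflt m [pick m' | all (fun x => g (s m x) == s m' x) (vbasis K)].

Definition GalLF : {set gal_of (fullv : {vspace L})} := ('Gal(fullv / 1%VS))%g.

Definition trKF (x : L) : L := \sum_(m < d) s m x.

Definition H12 : {set gal_of (fullv : {vspace L})} :=
  [set g in GalLF | [forall i : 'I_d, (val i < 2)%N == (val (idx_perm g i) < 2)%N]].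

Definition polytab (t : 'I_d * 'I_d * 'I_d * 'I_d) (X : {set 'I_d}) : F :=
  let: (a, b, c, e) := t in
  (X == [set c; e])%:R - (X == [set a; e])%:R - (X == [set c; b])%:R
  + (X == [set a; b])%:R.

Definition distinct4 (t : 'I_d * 'I_d * 'I_d * 'I_d) : bool :=
  let: (a, b, c, e) := t in uniq [:: a; b; c; e].

Definition specht (f : {ffun {set 'I_d} -> F}) : Prop :=
  exists coef : 'I_d * 'I_d * 'I_d * 'I_d -> F,
    f = [ffun X => \sum_(t | distinct4 t) coef t * polytab t X].

Definition specht_embedding (phi : {ffun {set 'I_d} -> F} -> L) : Prop :=
  [/\ forall (c : F) f h, specht f -> specht h ->
        phi [ffun X : {set 'I_d} => c * f X + h X] = c *: phi f + phi h,
      forall f, specht f -> phi f = 0 -> f = [ffun _ => 0]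
    & forall g f, g \in GalLF -> specht f ->
        phi [ffun X : {set 'I_d} => f [set i | idx_perm g i \in X]] = g (phi f)].

Definition isotypic (x : L) : Prop :=
  exists (n : nat) (phi : 'I_n -> {ffun {set 'I_d} -> F} -> L)
         (v : 'I_n -> {ffun {set 'I_d} -> F}),
    [/\ forall i, specht_embedding (phi i), forall i, specht (v i)
      & x = \sum_(i < n) phi i (v i)].

Definition V2 (x : L) : Prop := isotypic x /\ x \in fixedField H12.

Definition conjn (m : nat) (x : L) : L := oapp (fun i : 'I_d => s i x) 0 (insub m).
Definition permn (tau : 'S_d) (k : nat) : nat := oapp (fun i : 'I_d => val (tau i)) k (insub k).

Definition qmap (x : L) : L :=
  \sum_(tau : 'S_d | [forall i : 'I_d, (val i < 2)%N ==> (tau i == i)])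
     (conjn 0 x - conjn (permn tau 2) x) * (conjn 1 x - conjn (permn tau 3) x).
End Defs.

From HB Require Import structures.
From mathcomp Require Import all_boot all_order all_algebra all_fingroup all_field.
From mathcomp Require Import mpoly ring.
Set Implicit Arguments. Unset Strict Implicit. Unset Printing Implicit Defensive.
Import GRing.Theory.
Local Open Scope ring_scope.

(* Expand q in the coordinates of the alpha_j, letting the embeddings act
   L-linearly: this gives a quadratic form q_L on L^(d-1), and as char F <> 2
   and q_L agrees with sum_l Q^l omega_l on integer points, the two coincide on
   all of L^(d-1).  By trace duality,
     sum_j sigma_m(astar_j) (sigma_a(alpha_j) - sigma_b(alpha_j)) = [m = a] - [m = b],
   so at the point (sigma_m(astar_j))_j every summand of q_L is a product
   ([m = 1] - [m = tau 3]) ([m = 2] - [m = tau 4]) of differences supported on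
   disjoint pairs of indices, hence zero.  Thus sum_l sigma_m(Q^l(astar)) omega_l = 0
   for every m; since the matrix (sigma_m(b_j)) of a basis b of K is invertible and
   the omega_l are F-independent, each Q^l(astar) in K vanishes. *)

Section QuadraticForms.
Variables (R : comNzRingType) (n : nat).
Implicit Types (X : 'I_n -> 'I_n -> R) (u v y : 'I_n -> R).

Definition bform X u v : R := \sum_j \sum_k X j k * (u j * v k).

Definition quadratic (P : ('I_n -> R) -> R) := exists X, P =1 fun y => bform X y y.

Definition delta (j : 'I_n) : 'I_n -> R := fun i => (i == j)%:R.

Lemma eq_bform X u1 u2 v1 v2 : u1 =1 u2 -> v1 =1 v2 -> bform X u1 v1 = bform X u2 v2.
Proof. by move=> eu ev; apply: eq_bigr => j _; apply: eq_bigr => k _; rewrite eu ev. Qed.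

Lemma quadratic_ext P u v : quadratic P -> u =1 v -> P u = P v.
Proof. by case=> X PX uv; rewrite !PX (eq_bform X uv uv). Qed.

Lemma bformDl X u1 u2 v :
  bform X (fun i => u1 i + u2 i) v = bform X u1 v + bform X u2 v.
Proof.
rewrite -big_split; apply: eq_bigr => j _; rewrite -big_split.
by apply: eq_bigr => k _; rewrite mulrDl mulrDr.
Qed.

Lemma bformDr X u v1 v2 :
  bform X u (fun i => v1 i + v2 i) = bform X u v1 + bform X u v2.
Proof.
rewrite -big_split; apply: eq_bigr => j _; rewrite -big_split.
by apply: eq_bigr => k _; rewrite !mulrDr.
Qed.

Lemma bform_delta X j k : bform X (delta j) (delta k) = X j k.
Proof.
rewrite /bform (bigD1 j) //= [Z in _ + Z]big1 ?addr0 => [|a aj]; last first.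
  by apply: big1 => b _; rewrite /delta (negbTE aj) !mul0r mulr0.
rewrite (bigD1 k) //= [Z in _ + Z]big1 ?addr0 => [|b bk]; last first.
  by rewrite /delta (negbTE bk) !mulr0.
by rewrite /delta !eqxx mulr1 mulr1.
Qed.

Lemma bform_polar X j k :
  bform X (fun i => delta j i + delta k i) (fun i => delta j i + delta k i)
  - bform X (delta j) (delta j) - bform X (delta k) (delta k) = X j k + X k j.
Proof. rewrite bformDl !bformDr !bform_delta; ring. Qed.

Lemma bform_symmetrize X y :
  bform (fun j k => X j k + X k j) y y = 2%:R * bform X y y.
Proof.
rewrite /bform (eq_bigr (fun j => \sum_k X j k * (y j * y k) + \sum_k X k j * (y j * y k)));
  last by move=> j _; rewrite -big_split; apply: eq_bigr => k _; rewrite mulrDl.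
rewrite big_split /= [Z in _ + Z]exchange_big /= mulr_natl mulr2n; congr (_ + _).
by apply: eq_bigr => j _; apply: eq_bigr => k _; rewrite [y _ * _]mulrC.
Qed.

Lemma quadratic_sum (I : eqType) (r : seq I) (P : pred I) (Q : I -> ('I_n -> R) -> R) :
  {in r, forall i, P i -> quadratic (Q i)} ->
  quadratic (fun y => \sum_(i <- r | P i) Q i y).
Proof.
elim: r => [_|i r IHr Qr].
  exists (fun _ _ => 0) => y /=; rewrite big_nil /bform big1 // => j _.
  by rewrite big1 // => k _; rewrite mul0r.
have [X2 PX2] := IHr (fun j rj => Qr j (mem_behead (rj : j \in behead (i :: r)))).
have [Pi|nPi] := boolP (P i); last by exists X2 => y; rewrite big_cons (negbTE nPi) PX2.
have [X1 PX1] := Qr i (mem_head i r) Pi.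
exists (fun j k => X1 j k + X2 j k) => y; rewrite big_cons Pi PX1 PX2 -big_split.
by apply: eq_bigr => j _; rewrite -big_split; apply: eq_bigr => k _; rewrite mulrDl.
Qed.

Lemma quadraticZ c P : quadratic P -> quadratic (fun y => c * P y).
Proof.
case=> X PX; exists (fun j k => c * X j k) => y; rewrite PX mulr_sumr.
by apply: eq_bigr => j _; rewrite mulr_sumr; apply: eq_bigr => k _; rewrite mulrA.
Qed.

Lemma quadratic_mul_linear u v :
  quadratic (fun y => (\sum_j y j * u j) * (\sum_k y k * v k)).
Proof.
exists (fun j k => u j * v k) => y; rewrite mulr_suml; apply: eq_bigr => j _.
by rewrite mulr_sumr; apply: eq_bigr => k _; rewrite mulrACA mulrC.
Qed.

Lemma quadratic_meval (p : {mpoly R[n]}) :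
  p \is 2.-homog -> quadratic (fun y => p.@[y]).
Proof.
move=> /dhomogP p2.
change (quadratic (fun y => \sum_(m <- msupp p) p@_m * \prod_i y i ^+ m i)).
apply: quadratic_sum => m /p2 m2 _; apply: quadraticZ.
have {}m2 : mdeg m = 2%N := m2.
have [i mi] : exists i, (0 < m i)%N.
  apply/existsP; apply: contraT; rewrite negb_exists => /forallP m0.
  suff /eqP m_eq0 : m == 0%MM by rewrite m_eq0 mdeg0 in m2.
  by apply/eqP/mnmP => i; move: (m0 i); rewrite mnm0E lt0n negbK => /eqP.
have m_def : m = (U_(i) + (m - U_(i)))%MM.
  apply/mnmP => j; rewrite mnmDE mnmBE mnm1E.
  by case: eqP => [<-|_]; rewrite ?subn0 // subnKC.
have /mdeg1P[k /eqP mk] : mdeg (m - U_(i))%MM == 1%N.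
  by move: m2; rewrite {1}m_def mdegD mdeg1 add1n => -[->].
rewrite m_def mk; exists (fun a b => ((a == i) && (b == k))%:R) => y.
have := @commr_mmap1_M n R y U_(i) U_(k) (fun a x => mulrC x (y a)).
rewrite !mmap1U /mmap1 => ->; rewrite /bform.
rewrite (bigD1 i) //= [Z in _ + Z]big1 ?addr0 => [|a ai]; last first.
  by apply: big1 => b _; rewrite (negbTE ai) mul0r.
rewrite (bigD1 k) //= [Z in _ + Z]big1 ?addr0 => [|b bk]; last first.
  by rewrite (negbTE bk) andbF mul0r.
by rewrite !eqxx mul1r.
Qed.

End QuadraticForms.

Lemma quadratic_eq_nat (R : idomainType) n (P1 P2 : ('I_n -> R) -> R) :
  2%:R != 0 :> R -> quadratic P1 -> quadratic P2 ->
  (forall a : 'I_n -> nat, P1 (fun i => (a i)%:R) = P2 (fun i => (a i)%:R)) ->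
  P1 =1 P2.
Proof.
move=> two_neq0 [X1 PX1] [X2 PX2] eqP12.
have sym12 j k : X1 j k + X1 k j = X2 j k + X2 k j.
  have e : (fun i => delta R j i + delta R k i) =1 fun i => ((i == j) + (i == k))%N%:R.
    by move=> i; rewrite natrD.
  rewrite -!bform_polar (eq_bform X1 e e) (eq_bform X2 e e) -!PX1 -!PX2.
  by rewrite !eqP12.
move=> y; apply: (mulfI two_neq0); rewrite PX1 PX2 -!bform_symmetrize.
by apply: eq_bigr => j _; apply: eq_bigr => k _; rewrite sym12.
Qed.

Section MPolyMorphisms.
Variables (n : nat) (R S : comNzRingType).

Lemma rmorph_meval (f : {rmorphism R -> S}) (p : {mpoly R[n]}) y :
  f p.@[y] = (map_mpoly f p).@[f \o y].
Proof.
rewrite mevalE rmorph_sum [Z in map_mpoly f Z](mpolyE p).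
rewrite (raddf_sum (map_mpoly f)) (raddf_sum (meval _)); apply: eq_bigr => m _.
transitivity ((f p@_m *: 'X_[m]).@[f \o y]); last first.
  by congr meval; rewrite -(map_mpolyX f m); symmetry; exact: map_mpolyZ.
rewrite mevalZ mevalX rmorphM rmorph_prod.
by congr (_ * _); apply: eq_bigr => i _; rewrite rmorphXn.
Qed.

Lemma map_mpoly_id (g : {rmorphism R -> R}) (p : {mpoly R[n]}) :
  (forall m, g p@_m = p@_m) -> map_mpoly g p = p.
Proof. by move=> gp; apply/mpolyP => m; rewrite mcoeff_map_mpoly; exact: gp. Qed.

Lemma map_mpoly_dhomog (f : {rmorphism R -> S}) (p : {mpoly R[n]}) k :
  injective f -> p \is k.-homog -> map_mpoly f p \is k.-homog.
Proof. by move=> inj_f; rewrite !dhomogE (perm_all _ (msupp_map_mpoly p inj_f)). Qed.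

End MPolyMorphisms.

Lemma mem_meval_in_alg (F : fieldType) (L : fieldExtType F) (K : {subfield L}) n
    (p : {mpoly F[n]}) y :
  (forall i, y i \in K) -> (map_mpoly (in_alg L) p).@[y] \in K.
Proof.
move=> yK; rewrite mevalE rpred_sum // => m _; rewrite rpredM ?rpred_prod //.
  by rewrite mcoeff_map_mpoly rpredZ ?mem1v.
by move=> i _; rewrite rpredX.
Qed.

Lemma gal_meval_in_alg (F : fieldType) (L : splittingFieldType F) n
    (g : gal_of (fullv : {vspace L})) (p : {mpoly F[n]}) y :
  g (map_mpoly (in_alg L) p).@[y] = (map_mpoly (in_alg L) p).@[g \o y].
Proof.
rewrite rmorph_meval map_mpoly_id // => m.
by rewrite mcoeff_map_mpoly /= linearZ /= rmorph1.
Qed.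

Lemma natf_neq0_le (F : fieldType) d k :
  (forall p, p \in [pchar F] -> (d < p)%N) -> (0 < k <= d)%N -> k%:R != 0 :> F.
Proof.
move=> char_gt /andP[k_gt0 k_le]; rewrite natf_neq0_pchar.
apply/pnatP => // p p_pr p_k; apply/negP => /char_gt.
by rewrite ltnNge (leq_trans (dvdn_leq k_gt0 p_k) k_le).
Qed.

Section ConjugateMatrix.
Variables (F : fieldType) (L : splittingFieldType F) (d : nat).
Variable s : 'I_d -> gal_of (fullv : {vspace L}).

Definition conjmx k (b : 'I_k -> L) : 'M[L]_(d, k) := \matrix_(m, j) s m (b j).

Lemma trmx_conjmx_mul k (b c : 'I_k -> L) :
  (conjmx b)^T *m conjmx c = \matrix_(i, j) trKF s (b i * c j).
Proof.
by apply/matrixP => i j; rewrite !mxE; apply: eq_bigr => m _; rewrite !mxE rmorphM.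
Qed.

Lemma conjmx_coord_eq0 r (b : 'I_d -> L) (omega c : 'I_r -> L) :
  conjmx b \in unitmx -> free (mktuple omega) ->
  (forall l, c l \in <<mktuple b>>%VS) ->
  (forall m, \sum_l s m (c l) * omega l = 0) ->
  forall l, c l = 0.
Proof.
move=> b_unit omega_free c_span c_conj l.
pose x l i := coord (mktuple b) i (c l).
have conj_c m l' : s m (c l') = \sum_i (x l' i)%:A * s m (b i).
  rewrite {1}(coord_span (c_span l')) linear_sum; apply: eq_bigr => i _.
  by rewrite linearZ mulr_algl -tnth_nth tnth_mktuple.
pose w : 'cV[L]_d := \col_i \sum_l (x l i)%:A * omega l.
have w_eq0 : w = 0.
  suff Nw : conjmx b *m w = 0 by rewrite -(mulKmx b_unit w) Nw mulmx0.
  apply/matrixP => m j; rewrite /w !mxE -[RHS](c_conj m).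
  under eq_bigr do rewrite !mxE mulr_sumr.
  rewrite exchange_big; apply: eq_bigr => l' _ /=; rewrite conj_c mulr_suml.
  by apply: eq_bigr => i _; rewrite mulrCA mulrA.
have x_eq0 i : x l i = 0.
  have wi : \sum_l' (x l' i)%:A * omega l' = 0.
    by have := congr1 (fun M : 'cV_d => M i 0) w_eq0; rewrite !mxE.
  move/freeP: omega_free => /(_ (fun l' => x l' i)); apply; rewrite -[RHS]wi.
  by apply: eq_bigr => l' _; rewrite -tnth_nth tnth_mktuple mulr_algl.
rewrite (coord_span (c_span l)) big1 // => i _.
by move: (x_eq0 i); rewrite /x => ->; rewrite scale0r.
Qed.

End ConjugateMatrix.

Lemma delta_diffM_eq0 (R : pzRingType) (I : eqType) (m a b c e : I) :
  a != c -> a != e -> b != c -> b != e ->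
  ((m == a)%:R - (m == b)%:R) * ((m == c)%:R - (m == e)%:R) = 0 :> R.
Proof.
move=> ac ae bc be.
have [-> | ma] := eqVneq m a; first by rewrite (negbTE ac) (negbTE ae) subrr mulr0.
have [-> | mb] := eqVneq m b; first by rewrite (negbTE bc) (negbTE be) subrr mulr0.
by rewrite subrr mul0r.
Qed.

Section TraceDualBasis.
Variables (F : fieldType) (L : splittingFieldType F) (n : nat).
Variable s : 'I_n.+1 -> gal_of (fullv : {vspace L}).
Variables alpha astar : 'I_n -> L.
Hypothesis n_ge3 : (3 <= n)%N.
Hypothesis d_neq0 : n.+1%:R != 0 :> L.
Hypothesis trace_alpha : forall i, trKF s (alpha i) = 0.
Hypothesis trace_astar : forall j, trKF s (astar j) = 0.
Hypothesis trace_dual : forall i j, trKF s (alpha i * astar j) = (i == j)%:R.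

Definition cons_fun (c : L) (b : 'I_n -> L) (j : 'I_n.+1) : L := oapp b c (unlift ord0 j).

Lemma conj_natV m : s m n.+1%:R^-1 = n.+1%:R^-1.
Proof. by rewrite fmorphV rmorph_nat. Qed.

Lemma trKF_mul_natV x : trKF s (x * n.+1%:R^-1) = trKF s x * n.+1%:R^-1.
Proof. by rewrite /trKF mulr_suml; apply: eq_bigr => m _; rewrite rmorphM /= conj_natV. Qed.

Lemma cons_fun_enum c b : mktuple (cons_fun c b) = c :: [seq b i | i <- enum 'I_n] :> seq L.
Proof.
rewrite /= enum_ordSl /= -map_comp /cons_fun unlift_none /=; congr (_ :: _).
by apply: eq_map => i /=; rewrite liftK.
Qed.

Lemma conjmx_dual :
  (conjmx s (cons_fun 1 alpha))^T *m conjmx s (cons_fun n.+1%:R^-1 astar) = 1%:M.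
Proof.
rewrite trmx_conjmx_mul; apply/matrixP => i j; rewrite !mxE /cons_fun.
case: (unliftP ord0 i) => [i'|] ->; case: (unliftP ord0 j) => [j'|] ->;
  rewrite ?liftK ?unlift_none /=.
- by rewrite trace_dual (inj_eq lift_inj).
- by rewrite trKF_mul_natV trace_alpha mul0r.
- by rewrite mul1r trace_astar.
- rewrite mul1r /trKF (eq_bigr _ (fun m _ => conj_natV m)) sumr_const card_ord.
  by rewrite -[LHS]mulr_natr mulVf.
Qed.

Lemma conjmx_unit : conjmx s (cons_fun 1 alpha) \in unitmx.
Proof. by have [] := mulmx1_unit conjmx_dual; rewrite unitmx_tr. Qed.

Lemma conj_dual_sum m m' :
  \sum_i s m (astar i) * s m' (alpha i) = (m == m')%:R - n.+1%:R^-1.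
Proof.
have := congr1 (fun M : 'M[L]_n.+1 => M m m') (mulmx1C conjmx_dual).
rewrite !mxE big_ord_recl !mxE /cons_fun unlift_none /= rmorph1 mulr1 conj_natV.
move=> <-; rewrite addrC addKr; apply: eq_bigr => i _.
by rewrite !mxE liftK.
Qed.

Lemma conj_diff_dual m a b :
  \sum_j s m (astar j) * (s a (alpha j) - s b (alpha j)) = (m == a)%:R - (m == b)%:R.
Proof.
under eq_bigr do rewrite mulrBr.
by rewrite sumrB !conj_dual_sum opprB addrA subrK.
Qed.

Definition fixes01 (tau : 'S_n.+1) : bool :=
  [forall i : 'I_n.+1, (val i < 2)%N ==> (tau i == i)].

(* Indices are 0-based: [inord 0], [inord 1], [inord 2], [inord 3] are the
   paper's 1, 2, 3, 4. *)
Definition qlift (y : 'I_n -> L) : L :=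
  \sum_(tau | fixes01 tau)
    (\sum_j y j * (s (inord 0) (alpha j) - s (tau (inord 2)) (alpha j))) *
    (\sum_k y k * (s (inord 1) (alpha k) - s (tau (inord 3)) (alpha k))).

Lemma val_inord k : (k <= 3)%N -> val (inord k : 'I_n.+1) = k.
Proof. by move=> k_le3; apply: inordK; rewrite ltnS (leq_trans k_le3). Qed.

Lemma qmapE x :
  qmap s x = \sum_(tau | fixes01 tau)
    (s (inord 0) x - s (tau (inord 2)) x) * (s (inord 1) x - s (tau (inord 3)) x).
Proof.
have conjnE k y (i : 'I_n.+1) : k = val i -> conjn s k y = s i y.
  by move=> ->; rewrite /conjn valK.
have permnE tau k (i : 'I_n.+1) : k = val i -> permn tau k = val (tau i).
  by move=> ->; rewrite /permn valK.
apply: eq_bigr => tau _.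
rewrite (permnE _ 2 (inord 2)) ?val_inord // (permnE _ 3 (inord 3)) ?val_inord //.
rewrite (conjnE 0 _ (inord 0)) ?val_inord // (conjnE 1 _ (inord 1)) ?val_inord //.
by rewrite !(conjnE _ _ _ erefl).
Qed.

Lemma qmap_coord (a : 'I_n -> F) :
  qmap s (\sum_j a j *: alpha j) = qlift (fun j => (a j)%:A).
Proof.
rewrite qmapE; apply: eq_bigr => tau _; rewrite !linear_sum /=.
by congr (_ * _); rewrite -big_split; apply: eq_bigr => j _ /=;
  rewrite !linearZ /= mulr_algl scalerBr scalerN.
Qed.

Lemma quadratic_qlift : quadratic qlift.
Proof. by apply: quadratic_sum => tau _ _; apply: quadratic_mul_linear. Qed.

Lemma qlift_conj_dual m : qlift (fun j => s m (astar j)) = 0.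
Proof.
apply: big1 => tau /forallP fix01; rewrite !conj_diff_dual.
have fix_inord k : (k <= 1)%N -> tau (inord k) = inord k.
  move=> k_le1; apply/eqP; apply: (implyP (fix01 _)).
  by rewrite val_inord ?(leq_trans k_le1).
have inord_neq k k' : (k <= 3)%N -> (k' <= 3)%N -> k != k' -> (inord k : 'I_n.+1) != inord k'.
  by move=> k3 k'3; apply: contra => /eqP /(congr1 val); rewrite !val_inord // => ->.
apply: delta_diffM_eq0; rewrite ?(inj_eq perm_inj) ?inord_neq //.
- by rewrite -[X in X != _](fix_inord 0) // (inj_eq perm_inj) inord_neq.
- by rewrite -[X in _ != X](fix_inord 1) // (inj_eq perm_inj) inord_neq.
Qed.

Lemma meval_sum_qlift r (omega : 'I_r -> L) (Q : 'I_r -> {mpoly F[n]}) :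
  2%:R != 0 :> L -> (forall l, Q l \is 2.-homog) ->
  (forall a, qmap s (\sum_j a j *: alpha j) = \sum_l (Q l).@[a] *: omega l) ->
  forall y, \sum_l omega l * (map_mpoly (in_alg L) (Q l)).@[y] = qlift y.
Proof.
move=> two_neq0 Q_homog Q_qmap.
have QL_quad : quadratic (fun y => \sum_l omega l * (map_mpoly (in_alg L) (Q l)).@[y]).
  apply: quadratic_sum => l _ _; apply: quadraticZ; apply: quadratic_meval.
  exact/map_mpoly_dhomog/Q_homog/fmorph_inj.
apply: (quadratic_eq_nat two_neq0 QL_quad quadratic_qlift) => a.
have a_alg : (fun j => (a j)%:R : L) =1 fun j => in_alg L (a j)%:R.
  by move=> j; rewrite -[RHS]/(in_alg L (a j)%:R) rmorph_nat.
rewrite (quadratic_ext QL_quad a_alg) (quadratic_ext quadratic_qlift a_alg).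
rewrite -qmap_coord Q_qmap; apply: eq_bigr => l _.
by rewrite -mulr_algl mulrC -in_algE rmorph_meval.
Qed.

End TraceDualBasis.

Theorem mainTheorem17 (F : fieldType) (L : splittingFieldType F) (d : nat)
  (K : {subfield L}) (s : 'I_d -> gal_of (fullv : {vspace L}))
  (alpha astar : 'I_d.-1 -> L)
  (omega : 'I_((d * (d - 3))./2) -> L)
  (Q : 'I_((d * (d - 3))./2) -> {mpoly F[d.-1]}) :
  (4 <= d)%N ->
  (forall p, p \in [pchar F] -> (d < p)%N) ->
  \dim K = d ->
  galois 1%VS (fullv : {vspace L}) ->
  (forall E : {subfield L}, (K <= E)%VS -> normalField 1%VS E ->
      (E : {vspace L}) = fullv) ->
  (GalLF L \isog [set: 'S_d])%g ->
  (forall m, s m \in GalLF L) ->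
  (forall m : 'I_d, val m = 0%N -> {in K, forall x, s m x = x}) ->
  (forall m m' : 'I_d, m != m' -> exists2 x, x \in K & s m x != s m' x) ->
  basis_of K (1 :: [seq alpha i | i <- enum 'I_d.-1]) ->
  (forall i, trKF s (alpha i) = 0) ->
  (forall j, astar j \in K) ->
  (forall j, trKF s (astar j) = 0) ->
  (forall i j, trKF s (alpha i * astar j) = (i == j)%:R) ->
  (forall l, V2 K s (omega l)) ->
  free [seq omega l | l <- enum 'I_((d * (d - 3))./2)] ->
  (forall x, V2 K s x -> x \in <<[seq omega l | l <- enum 'I_((d * (d - 3))./2)]>>%VS) ->
  (forall l, Q l \is 2.-homog) ->
  (forall a : 'I_d.-1 -> F,
     qmap s (\sum_j a j *: alpha j) = \sum_l (Q l).@[a] *: omega l) ->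
  forall l,
    (map_mpoly (in_alg L) (Q l)).@[astar] = 0 /\
    (forall m : 'I_d, (map_mpoly (in_alg L) (Q l)).@[fun j => s m (astar j)] = 0).
Proof.
move: omega Q; move: ((d * (d - 3))./2)%N => r omega Q.
case: d s alpha astar omega Q => [|n] // s alpha astar omega Q n_ge3 char_gt _ _ _ _ _ _ _.
move=> basis_K tr_alpha astar_K tr_astar tr_dual _ omega_free _ Q_homog Q_qmap /=.
have natL_neq0 k : (0 < k <= n.+1)%N -> k%:R != 0 :> L.
  by move=> k_bd; rewrite -(rmorph_nat (in_alg L)) fmorph_eq0 (natf_neq0_le char_gt).
have d_neq0 := natL_neq0 n.+1 (leqnn _).
have two_neq0 : 2%:R != 0 :> L by rewrite natL_neq0 // ltnS (leq_trans _ n_ge3).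
pose c l := (map_mpoly (in_alg L) (Q l)).@[astar].
have c_eq0 l : c l = 0.
  apply: (conjmx_coord_eq0 (conjmx_unit d_neq0 tr_alpha tr_astar tr_dual) omega_free).
  - move: basis_K => /andP[/eqP span_K _] l'; rewrite cons_fun_enum span_K.
    exact: mem_meval_in_alg.
  - move=> m; rewrite -[RHS](qlift_conj_dual n_ge3 d_neq0 tr_alpha tr_astar tr_dual m).
    rewrite -(meval_sum_qlift n_ge3 two_neq0 Q_homog Q_qmap).
    by apply: eq_bigr => l' _; rewrite gal_meval_in_alg mulrC.
move=> l; split=> [|m]; first exact: c_eq0.
by rewrite -gal_meval_in_alg -/(c l) c_eq0 rmorph0.
Qed.
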